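(* Each of the following three rules produces integers $\mathsf t_i,\mathsf p_i\in\{0,\dots,255\}$ such that the case of $(\mathsf t_i,\mathsf p_i)$ with respect to base $256$ equals the case of $(A_i,B_i)$ with respect to the limb base $b$. (1) Native radix: $b=2^{64}$, $0\le A_i,B_i<2^{64}$, $D_i=(A_i+B_i)\bmod 2^{64}$, $G_i=\mathrm{popcnt}(D_i)$, $m_i=1$ if $D_i<A_i$ and $m_i=0$ otherwise, $\mathsf t_i=G_i+65m_i$, $\mathsf p_i=191$. (2) Reduced radix $2^k$ (first rule): $1\le k\le 63$, $b=2^k$, $0\le A_i,B_i<2^k$, $D_i=A_i+B_i$, $G_i=\mathrm{popcnt}(D_i)$, $m_i=1$ if $D_i\ge 2^k$ and $m_i=0$ otherwise, $\mathsf t_i=G_i+65m_i$, $\mathsf p_i=255-k$. (3) Reduced radix $2^k$ (second rule): $1\le k\le 63$, $b=2^k$, $0\le A_i,B_i<2^k$, $D_i=A_i+B_i$, $G_i=\min(D_i+2^{64}-2^k-1,\,2^{64}-1)$, $\mathsf t_i=\max(G_i-(2^{64}-3),\,0)$, $\mathsf p_i=254$.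
   Context: $\mathrm{popcnt}(x)$ is the number of ones in the binary representation of the nonnegative integer $x$. For a base $b\ge2$ and integers $0\le x,y<b$, the case of $(x,y)$ with respect to base $b$ is $\mathbf N$ if $x+y\le b-2$, $\mathbf P$ if $x+y=b-1$, and $\mathbf G$ if $x+y\ge b$. *)

From mathcomp Require Import all_boot.
Set Implicit Arguments. Unset Strict Implicit. Unset Printing Implicit Defensive.

(* popcnt x = number of ones in the binary representation of x.
   Bit i of x is odd (x %/ 2^i); all bits of index >= x vanish since x < 2^x,
   so summing over i < x.+1 counts every one bit. *)
Definition popcnt (x : nat) : nat := \sum_(i < x.+1) odd (x %/ 2 ^ i).

Inductive digit_case := CaseN | CaseP | CaseG.

Definition case_of (b x y : nat) : digit_case :=
  if x + y <= b - 2 then CaseN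
  else if x + y == b - 1 then CaseP
  else CaseG.

From mathcomp Require Import all_boot.
From mathcomp Require Import zify.

Set Implicit Arguments.
Unset Strict Implicit.
Unset Printing Implicit Defensive.

(* Comparing t + p with 255 amounts to comparing t with 255 - p, and the case
   of (A, B) in base 2^k is the comparison of A + B with 2^k - 1.  Without
   overflow, the popcount of a k-bit word is at most k, with equality exactly
   for the all-ones word 2^k - 1; with overflow the flag adds 65, more than any
   width.  The saturating rule computes min(A + B + 1 - (2^k - 1), 2), which
   is 0, 1 or 2 according as A + B is below, at or above 2^k - 1. *)

Definition cmp_case (s c : nat) : digit_case :=
  if s < c then CaseN else if s == c then CaseP else CaseG.

(* [1 < b] matters: for [b = 1] the truncated [b - 2] and [b - 1] coincide. *)
Lemma case_ofE b x y : 1 < b -> case_of b x y = cmp_case (x + y) b.-1.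
Proof.
move=> b_gt1; rewrite /case_of /cmp_case.
have -> : (x + y <= b - 2) = (x + y < b.-1) by lia.
by rewrite subn1.
Qed.

Lemma cmp_case_addr s p c : cmp_case (s + p) (c + p) = cmp_case s c.
Proof. by rewrite /cmp_case ltn_add2r eqn_add2r. Qed.

Lemma case_of_shift b t p : 0 < b -> p <= b -> case_of b.+1 t p = cmp_case t (b - p).
Proof.
by move=> b_gt0 p_le; rewrite case_ofE // -(cmp_case_addr t p) subnK.
Qed.

Lemma cmp_caseG s c : c < s -> cmp_case s c = CaseG.
Proof. by rewrite /cmp_case => lt_cs; rewrite ltnNge ltnW // gtn_eqF. Qed.

Lemma cmp_case_leq s c s' c' : s <= c -> s' <= c' ->
  (s == c) = (s' == c') -> cmp_case s c = cmp_case s' c'.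
Proof. by rewrite /cmp_case !ltn_neqAle => -> -> ->. Qed.

Lemma cmp_case_saturate s c : cmp_case (minn (s.+1 - c) 2) 1 = cmp_case s c.
Proof.
rewrite /cmp_case; case: ltngtP => cmp_sc.
- by rewrite ifT //; lia.
- by rewrite !ifF //; apply/negbTE; lia.
- by rewrite ifF ?ifT //; lia.
Qed.

Lemma saturating_rule_eq s X Y : 0 < X < Y -> 2 < Y ->
  minn (s + Y - X - 1) (Y - 1) - (Y - 3) = minn (s.+1 - X.-1) 2.
Proof. lia. Qed.

Definition popcnt_low (n x : nat) : nat := \sum_(i < n) odd (x %/ 2 ^ i).

Lemma popcnt_lowS n x : popcnt_low n.+1 x = odd x + popcnt_low n x./2.
Proof.
rewrite /popcnt_low big_ord_recl expn0 divn1; congr (_ + _).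
by apply: eq_bigr => i _; rewrite expnS divnMA divn2.
Qed.

Lemma popcnt_low_widen n m x : x < 2 ^ n -> popcnt_low (n + m) x = popcnt_low n x.
Proof.
move=> x_lt; rewrite /popcnt_low big_split_ord /= [X in _ + X]big1 ?addn0 // => i _.
by rewrite divn_small // (leq_trans x_lt) // leq_pexp2l // leq_addr.
Qed.

Lemma popcntE n x : x < 2 ^ n -> popcnt x = popcnt_low n x.
Proof.
move=> x_lt; have x_lt' : x < 2 ^ x.+1 by rewrite (leq_trans (ltn_expl x (ltnSn 1))) // leq_exp2l.
by rewrite /popcnt -/(popcnt_low x.+1 x) -(popcnt_low_widen n x_lt') -(popcnt_low_widen x.+1 x_lt) addnC.
Qed.

Lemma popcnt_low_leq n x : popcnt_low n x <= n.
Proof.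
rewrite /popcnt_low -[leqRHS]card_ord -sum1_card.
by apply: leq_sum => i _; rewrite leq_b1.
Qed.

Lemma popcnt_low_full n x : x < 2 ^ n -> (popcnt_low n x == n) = (x == (2 ^ n).-1).
Proof.
elim: n x => [|n IHn] x; first by rewrite expn0 ltnS leqn0 /popcnt_low big_ord0 eq_sym.
move=> x_lt; have half_lt : x./2 < 2 ^ n by move: x_lt; rewrite expnS; lia.
have := IHn _ half_lt; have := popcnt_low_leq n x./2; have := odd_double_half x.
rewrite popcnt_lowS expnS; move: x_lt; rewrite expnS.
by case: (odd x) => /=; case: eqP; case: eqP; lia.
Qed.

Lemma cmp_case_popcnt n d : d < 2 ^ n -> cmp_case (popcnt d) n = cmp_case d (2 ^ n).-1.
Proof.
move=> d_lt; rewrite (popcntE d_lt); apply: cmp_case_leq.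
- exact: popcnt_low_leq.
- by rewrite -ltnS prednK ?expn_gt0.
- exact: popcnt_low_full.
Qed.

Lemma popcnt_leq n x : x < 2 ^ n -> popcnt x <= n.
Proof. by move=> x_lt; rewrite (popcntE x_lt) popcnt_low_leq. Qed.

Lemma cmp_case_carry_popcnt n s d : n < 65 -> (s < 2 ^ n -> d = s) ->
  cmp_case (popcnt d + 65 * (if 2 ^ n <= s then 1 else 0)) n = cmp_case s (2 ^ n).-1.
Proof.
move=> n_lt d_eq; case: leqP => [sum_ge | sum_lt].
- by have := expn_gt0 2 n; rewrite !cmp_caseG //; lia.
- by rewrite addn0 d_eq // cmp_case_popcnt.
Qed.

Lemma addn_mod_overflow m a b : a < m -> b < m -> ((a + b) %% m < a) = (m <= a + b).
Proof.
move=> a_lt b_lt; case: (leqP m (a + b)) => [sum_ge | sum_lt].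
- by rewrite -(subnK sum_ge) modnDr modn_small; lia.
- by rewrite modn_small // ltnNge leq_addr.
Qed.

Theorem lemma1 :
  (* (1) native radix b = 2^64 *)
  (forall A B : nat, A < 2 ^ 64 -> B < 2 ^ 64 ->
     let D := (A + B) %% 2 ^ 64 in
     let G := popcnt D in
     let m := if D < A then 1 else 0 in
     let t := G + 65 * m in
     let p := 191 in
     [/\ t <= 255, p <= 255 & case_of 256 t p = case_of (2 ^ 64) A B]) /\
  (* (2) reduced radix 2^k, first rule *)
  (forall k A B : nat, 1 <= k <= 63 -> A < 2 ^ k -> B < 2 ^ k ->
     let D := A + B in
     let G := popcnt D in
     let m := if 2 ^ k <= D then 1 else 0 in
     let t := G + 65 * m in
     let p := 255 - k in
     [/\ t <= 255, p <= 255 & case_of 256 t p = case_of (2 ^ k) A B]) /\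
  (* (3) reduced radix 2^k, second rule *)
  (forall k A B : nat, 1 <= k <= 63 -> A < 2 ^ k -> B < 2 ^ k ->
     let D := A + B in
     let G := minn (D + 2 ^ 64 - 2 ^ k - 1) (2 ^ 64 - 1) in
     let t := maxn (G - (2 ^ 64 - 3)) 0 in
     let p := 254 in
     [/\ t <= 255, p <= 255 & case_of 256 t p = case_of (2 ^ k) A B]).
Proof.
split; [|split] => [A B A_lt B_lt | k A B k_bounds A_lt B_lt | k A B k_bounds A_lt B_lt] /=.
- have D_lt : (A + B) %% 2 ^ 64 < 2 ^ 64 by rewrite ltn_mod expn_gt0.
  rewrite [case_of 256 _ _]case_of_shift // case_ofE; last by rewrite (ltn_exp2l 0).
  rewrite addn_mod_overflow //; split; [|by []|].
  + by have := popcnt_leq D_lt; case: ifP; lia.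
  + by apply: cmp_case_carry_popcnt => // sum_lt; rewrite modn_small.
- have pow_gt1 : 1 < 2 ^ k by rewrite (ltn_exp2l 0); lia.
  have D_lt : A + B < 2 ^ k.+1 by rewrite expnS; lia.
  rewrite [case_of 256 _ _]case_of_shift ?leq_subr // case_ofE // subKn; last by lia.
  split; [|by []|].
  + by have := popcnt_leq D_lt; case: ifP; lia.
  + by apply: cmp_case_carry_popcnt; lia.
- have pow_gt1 : 1 < 2 ^ k by rewrite (ltn_exp2l 0); lia.
  have pow_lt : 2 ^ k < 2 ^ 64 by rewrite ltn_exp2l; lia.
  rewrite [case_of 256 _ _]case_of_shift // case_ofE // maxn0 saturating_rule_eq; last 2 first.
  + by rewrite pow_lt ltnW.
  + by rewrite (ltn_exp2l 1).
  by split; [lia | by [] | rewrite cmp_case_saturate].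
Qed.
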